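(* Assume (A4) holds, and let $R^*:=\sup_{n\ge1}\sup\{|\boldsymbol\theta|_\infty:\boldsymbol\theta\in\operatorname{argmin}^*\widehat{\mathcal R}_{\ell,n}\}$. Then for all $n\ge1$ and $\lambda>0$ the set of minimizers of $\widehat{\mathcal R}_{\ell,\lambda}$ over $\mathcal P_{\mathbf a,\infty}$ is nonempty, and \[\sup_{\lambda\ge0,\,n\ge1}\Big\{|\boldsymbol\theta|_\infty:\boldsymbol\theta\in\operatorname{argmin}^*\widehat{\mathcal R}_{\ell,\lambda}\Big\}\le R^*\cdot P(\mathbf a)^{1/p}.\]
   Context: Setting: $d\in\mathbb N$, $\mathcal X=[0,1]^d$, $\mathcal Y=\{-1,1\}$; $\rho$ is a probability distribution on $\mathcal X\times\mathcal Y$, $(X,Y)\sim\rho$, $(x_i,y_i)_{i\ge1}$ i.i.d. from $\rho$. Networks: $\sigma(t)=\max\{0,t\}$; architecture $\mathbf a=(a_0,\dots,a_L)$ with $a_0=d$, $a_L=1$, $P(\mathbf a)=\sum_{l=1}^L(a_la_{l-1}+a_l)$; parametrization $\boldsymbol\theta=((W_l,B_l))_{l=1}^L$, $W_l\in\mathbb R^{a_l\times a_{l-1}}$, $B_l\in\mathbb R^{a_l}$, viewed as a vector in $\mathbb R^{P(\mathbf a)}$ with norms $|\cdot|_\infty$ (max absolute entry) and $|\boldsymbol\theta|_p^p=$ sum of $p$-th powers of absolute entries; $\mathcal P_{\mathbf a,\infty}$ is the set of all parametrizations. Realization $f(x;\boldsymbol\theta)=\operatorname{clip}_1(T_L\circ\sigma\circ\cdots\circ\sigma\circ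 T_1(x))$, $T_l(z)=W_lz+B_l$, $\operatorname{clip}_1(t)=\max(-1,\min(1,t))$. Fix $0<p<\infty$. $\widehat{\mathcal R}_{\ell,\lambda}(\boldsymbol\theta)=\frac1n\sum_{i=1}^n(f(x_i;\boldsymbol\theta)-y_i)^2+\frac\lambda2|\boldsymbol\theta|_p^p$, $\widehat{\mathcal R}_{\ell,n}=\widehat{\mathcal R}_{\ell,0}$; $\mathcal R_\ell(\boldsymbol\theta)=\mathbb E[(f(X;\boldsymbol\theta)-Y)^2]$. For $\lambda\ge0$, $\operatorname{argmin}^*\widehat{\mathcal R}_{\ell,\lambda}$ is the set of minimizers of $|\boldsymbol\theta|_\infty$ among the minimizers of $\widehat{\mathcal R}_{\ell,\lambda}$ over $\mathcal P_{\mathbf a,\infty}$ (in particular $\operatorname{argmin}^*\widehat{\mathcal R}_{\ell,n}$ for $\lambda=0$). Assumption (A4): the argmins of $\mathcal R_\ell$ and $\widehat{\mathcal R}_{\ell,n}$ are nonempty, and almost surely over the i.i.d. draws, $\sup_{n\ge1}\sup\{|\boldsymbol\theta|_\infty:\boldsymbol\theta\in\operatorname{argmin}^*\widehat{\mathcal R}_{\ell,n}\}<\infty$. *)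

From HB Require Import structures.
From mathcomp Require Import all_boot all_order all_algebra.
From mathcomp Require Import all_classical all_reals all_analysis.
Set Implicit Arguments. Unset Strict Implicit. Unset Printing Implicit Defensive.
Import Order.TTheory GRing.Theory Num.Theory.
Local Open Scope ring_scope.
Local Open Scope classical_set_scope.

Section Network.
Variable R : realType.

(* Architecture a = (a_0, ..., a_L) encoded as the list [:: a_0; ...; a_L]. *)
Definition depth (a : seq nat) : nat := (size a).-1.
Definition arch_ok (d : nat) (a : seq nat) : bool :=
  [&& 2 <= size a, nth 0 a 0 == d & nth 0 a (depth a) == 1]%N.

Definition nparams (a : seq nat) : nat :=
  (\sum_(1 <= l < size a) (nth 0 a l * nth 0 a l.-1 + nth 0 a l))%N.

(* Number of parameters of layers 1..l-1: offset of layer l in the flat vector. *)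
Definition offset (a : seq nat) (l : nat) : nat :=
  (\sum_(1 <= k < l) (nth 0 a k * nth 0 a k.-1 + nth 0 a k))%N.

Definition param (a : seq nat) := 'rV[R]_(nparams a).

(* k-th entry (0-based) of a row vector, 0 if out of range. *)
Definition vget (n : nat) (v : 'rV[R]_n) (k : nat) : R :=
  \sum_(i < n | val i == k) v 0 i.

(* Flattening convention: layer l occupies positions offset a l + [0, a_l a_{l-1} + a_l);
   first W_l in row-major order, then B_l.  (i, j are 0-based.) *)
Definition Wt a (th : param a) (l i j : nat) : R :=
  vget th (offset a l + i * nth 0 a l.-1 + j).
Definition Bs a (th : param a) (l i : nat) : R :=
  vget th (offset a l + nth 0 a l * nth 0 a l.-1 + i).

Definition relu (t : R) : R := Num.max 0 t.
Definition clip1 (t : R) : R := Num.max (-1) (Num.min 1 t).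

(* hid a th x l = sigma o T_l o ... o sigma o T_1 (x)  (hid 0 = x), as nat-indexed vector *)
Fixpoint hid (d : nat) a (th : param a) (x : 'rV[R]_d) (l : nat) : nat -> R :=
  match l with
  | 0 => fun j => vget x j
  | l'.+1 => fun i =>
      relu (\sum_(j < nth 0 a l') Wt th l'.+1 i j * hid th x l' j + Bs th l'.+1 i)
  end.

Definition realization (d : nat) a (th : param a) (x : 'rV[R]_d) : R :=
  let L := depth a in
  clip1 (\sum_(j < nth 0 a L.-1) Wt th L 0 j * hid th x L.-1 j + Bs th L 0).

Definition norm_inf a (th : param a) : R := \big[Num.max/0]_(i < nparams a) `|th 0 i|.
Definition norm_pp a (p : R) (th : param a) : R := \sum_(i < nparams a) (`|th 0 i| `^ p).

(* Regularized empirical risk with the first n samples (xs 0, ys 0), ..., (xs n-1, ys n-1)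
   (these are (x_1,y_1),...,(x_n,y_n) of the paper). *)
Definition emp_risk (d : nat) a (p : R) (xs : nat -> 'rV[R]_d) (ys : nat -> R)
    (n : nat) (lam : R) (th : param a) : R :=
  n%:R^-1 * (\sum_(i < n) (realization th (xs i) - ys i) ^+ 2) + lam / 2 * norm_pp p th.

Definition argmin (T : Type) (F : T -> R) : set T := [set t | forall t', F t <= F t'].

Definition argmin_star a (F : param a -> R) : set (param a) :=
  [set th | argmin F th /\ forall th', argmin F th' -> norm_inf th <= norm_inf th'].

End Network.

From HB Require Import structures.
From mathcomp Require Import all_boot all_order all_algebra.
From mathcomp Require Import all_classical all_reals all_analysis.
Import Order.TTheory GRing.Theory Num.Theory.
Import numFieldNormedType.Exports.
Local Open Scope ring_scope.
Local Open Scope classical_set_scope.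

(* All objectives are continuous in the parameters, and each minimisation can be
   confined to a compact box.  For lam > 0 the penalty lam/2 |th|_p^p bounds every
   th doing better than th = 0; among the minimisers of the unregularised risk,
   which form a closed set, the continuous |th|_inf is minimised below its value
   at any one of them.  Comparing the regularised and the unregularised risk at a
   minimiser th of the former and th* of the latter gives |th|_p <= |th*|_p, hence
   |th|_inf <= |th|_p <= P(a)^(1/p) |th*|_inf <= P(a)^(1/p) R*; for lam = 0 one uses
   P(a) >= 1 instead.  The bound is proved in the extended reals. *)

Section continuity.
Context {R : realType} {T : topologicalType}.

Lemma continuousT_comp (S U : topologicalType) (f : T -> S) (g : S -> U) :
  continuous f -> continuous g -> continuous (fun x => g (f x)).
Proof. by move=> cf cg x; exact: continuous_comp (cf x) (cg (f x)). Qed.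

Lemma continuousT_add (f g : T -> R) :
  continuous f -> continuous g -> continuous (fun x => f x + g x).
Proof. by move=> cf cg x; apply: cvgD; [exact: cf|exact: cg]. Qed.

Lemma continuousT_mul (f g : T -> R) :
  continuous f -> continuous g -> continuous (fun x => f x * g x).
Proof. by move=> cf cg x; apply: cvgM; [exact: cf|exact: cg]. Qed.

Lemma continuous_sumr (I : Type) (r : seq I) (P : pred I) (F : I -> T -> R) :
  (forall i, P i -> continuous (F i)) ->
  continuous (fun x => \sum_(i <- r | P i) F i x).
Proof. exact/continuous_big/add_continuous. Qed.

Lemma continuous_bigmaxr (I : Type) (r : seq I) (P : pred I) (F : I -> T -> R) :
  (forall i, P i -> continuous (F i)) ->
  continuous (fun x => \big[Num.max/0]_(i <- r | P i) F i x).
Proof.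
apply: continuous_big => z.
by apply: (@continuous_max R _ fst snd); [exact: cvg_fst|exact: cvg_snd].
Qed.

End continuity.

Section powR_pos.
Context {R : realType} {p : R}.
Hypothesis p_gt0 : 0 < p.

Lemma powRK {x : R} : 0 <= x -> (x `^ p) `^ p^-1 = x.
Proof. by move=> x_ge0; rewrite -powRrM mulfV ?gt_eqF // powRr1. Qed.

Lemma powRVK {x : R} : 0 <= x -> (x `^ p^-1) `^ p = x.
Proof. by move=> x_ge0; rewrite -powRrM mulVf ?gt_eqF // powRr1. Qed.

Lemma continuous_normr_powR : continuous (fun x : R => `|x| `^ p).
Proof.
move=> x; have [->|x_neq0] := eqVneq x 0.
  apply/cvgrPdist_lt => e e_gt0; rewrite normr0 powR0 ?gt_eqF //.
  near=> y; rewrite sub0r normrN ger0_norm ?powR_ge0 //.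
  rewrite -[ltRHS](powRVK (ltW e_gt0)) gt0_ltr_powR ?nnegrE ?powR_ge0 //.
  by near: y; apply: (cvgr0_norm_lt (fun y : R^o => y) cvg_id); exact: powR_gt0.
have normx_gt0 : 0 < `|x| by rewrite normr_gt0.
have : {for x, continuous (fun y : R => expR (p * ln `|y|))}.
  apply: continuous_comp; last exact: continuous_expR.
  apply: cvgM; first exact: cvg_cst.
  exact: continuous_comp (@norm_continuous _ R^o x) (continuous_ln normx_gt0).
have powRx : `|x| `^ p = expR (p * ln `|x|) by rewrite /powR normr_eq0 ifN.
rewrite /continuous_at powRx => /(cvg_trans _); apply; apply: near_eq_cvg; near=> y.
rewrite /powR normr_eq0 ifF //; apply/negbTE.
by near: y; exact: (@cvgr_neq0 _ R^o _ _ _ (fun y => y) x cvg_id x_neq0).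
Unshelve. all: by end_near.
Qed.

End powR_pos.

Section realization_continuity.
Context {R : realType} {d : nat} (a : seq nat) (x : 'rV[R]_d).

Lemma continuous_vget n k : continuous (fun v : 'rV[R]_n => vget v k).
Proof. by apply: continuous_sumr => i _; exact: coord_continuous. Qed.

Lemma continuous_relu : continuous (@relu R).
Proof.
by move=> t; apply: (@continuous_max R R (fun=> 0) id); [exact: cvg_cst|exact: cvg_id].
Qed.

Lemma continuous_clip1 : continuous (@clip1 R).
Proof.
move=> t; apply: (@continuous_max R R (fun=> -1) (fun s => Num.min 1 s)).
  exact: cvg_cst.
by apply: continuous_min; [exact: cvg_cst|exact: cvg_id].
Qed.

Lemma continuous_hid l i : continuous (fun th : param R a => hid th x l i).
Proof.
elim: l i => [|l IHl] i /=; first exact: cst_continuous.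
apply: continuousT_comp continuous_relu.
apply: continuousT_add; last exact: continuous_vget.
apply: continuous_sumr => j _.
by apply: continuousT_mul; [exact: continuous_vget|exact: IHl].
Qed.

Lemma continuous_realization : continuous (fun th : param R a => realization th x).
Proof.
apply: continuousT_comp continuous_clip1.
apply: continuousT_add; last exact: continuous_vget.
apply: continuous_sumr => j _.
by apply: continuousT_mul; [exact: continuous_vget|exact: continuous_hid].
Qed.

End realization_continuity.

Section norms.
Context {R : realType} {a : seq nat}.
Implicit Types (th : param R a) (p M : R).

Lemma continuous_norm_inf : continuous (@norm_inf R a).
Proof.
apply: continuous_bigmaxr => i _.
apply: (@continuousT_comp _ R _ (fun v : param R a => v 0 i) Num.norm).
  exact: coord_continuous.
exact: (@norm_continuous _ R^o).
Qed.

Lemma normr_le_norm_inf th i : `|th 0 i| <= norm_inf th.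
Proof. exact: (le_bigmax _ (fun i => `|th 0 i|)). Qed.

Lemma norm_inf_ge0 th : 0 <= norm_inf th.
Proof. by rewrite /norm_inf; elim/big_ind: _ => // s t s_ge0 _; rewrite le_max s_ge0. Qed.

Lemma norm_inf_le th M : 0 <= M -> (forall i, `|th 0 i| <= M) -> norm_inf th <= M.
Proof. by move=> M_ge0 thM; apply: bigmax_le. Qed.

Lemma continuous_norm_pp p : 0 < p -> continuous (@norm_pp R a p).
Proof.
move=> p_gt0; apply: continuous_sumr => i _.
apply: (@continuousT_comp _ R _ (fun v : param R a => v 0 i) (fun t => `|t| `^ p)).
  exact: coord_continuous.
exact: continuous_normr_powR.
Qed.

Lemma normr_powR_le_norm_pp p th i : `|th 0 i| `^ p <= norm_pp p th.
Proof.
rewrite /norm_pp (bigD1 i) //= lerDl.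
by apply: sumr_ge0 => j _; exact: powR_ge0.
Qed.

Lemma normr_le_norm_pp_root p th i M : 0 < p ->
  norm_pp p th <= M -> `|th 0 i| <= M `^ p^-1.
Proof.
move=> p_gt0 thM; have thiM := le_trans (normr_powR_le_norm_pp p th i) thM.
rewrite -(powRK p_gt0 (normr_ge0 (th 0 i))).
by apply: ge0_ler_powR; rewrite ?invr_ge0 ?(ltW p_gt0) ?nnegrE ?powR_ge0 ?(le_trans _ thiM).
Qed.

Lemma norm_pp_le_norm_inf p th : 0 <= p ->
  norm_pp p th <= (nparams a)%:R * norm_inf th `^ p.
Proof.
move=> p_ge0; rewrite mulr_natl -[X in _ *+ X]card_ord -sumr_const.
apply: ler_sum => i _; apply: ge0_ler_powR; rewrite ?nnegrE ?norm_inf_ge0 //.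
exact: normr_le_norm_inf.
Qed.

End norms.

Lemma closed_argmin {R : realType} (T : topologicalType) (F : T -> R) :
  continuous F -> closed (argmin F).
Proof.
move=> F_cont; rewrite (_ : argmin F = \bigcap_(t in setT) F @^-1` [set r | r <= F t]).
  by apply: closed_bigI => t _; apply: preimage_closed => [s _|]; [exact: F_cont|exact: closed_le].
by apply/seteqP; split => [s Fs t _|s Fs t]; [exact: Fs|exact: Fs].
Qed.

Lemma compact_box {R : realType} n (M : R) : compact [set v : 'rV[R]_n | forall i, `|v 0 i| <= M].
Proof.
rewrite (_ : [set v | _] = [set v : 'rV[R]_n | forall i, `[- M, M]%classic (v ord0 i)]).
  exact: rV_compact (fun=> @segment_compact R (- M) M).
by apply/seteqP; split => v vM i; have := vM i; rewrite /= in_itv /= ler_norml.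
Qed.

Lemma EVT_min_closed_bounded {R : realType} {n} {F : 'rV[R]_n -> R} {S : set 'rV[R]_n} {t0} M :
  continuous F -> closed S -> S t0 ->
  (forall t, S t -> F t <= F t0 -> forall i, `|t 0 i| <= M) ->
  exists2 c, S c & forall t, S t -> F c <= F t.
Proof.
move=> F_cont S_closed S_t0 sublevel_bounded.
pose K := [set v : 'rV[R]_n | forall i, `|v 0 i| <= M] `&` (S `&` F @^-1` [set r | r <= F t0]).
have K_t0 : K t0 by split; [exact: sublevel_bounded S_t0 (lexx _)|split => /=].
have K_compact : compact K.
  apply: compact_closedI; first exact: compact_box.
  apply: closedI => //; apply: preimage_closed => [s _|]; [exact: F_cont|exact: closed_le].
have [c Kc c_min] := EVT_min_rV (ex_intro _ t0 K_t0) K_compact (continuous_subspaceT F_cont).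
move: Kc; rewrite inE => -[_ [S_c _]]; exists c => // t S_t.
have [Ft_le|Ft_gt] := leP (F t) (F t0).
  by apply: c_min; rewrite inE; split; [exact: sublevel_bounded|split].
by apply: le_trans (ltW Ft_gt); apply: c_min; rewrite inE.
Qed.

Lemma argmin_star_exists {R : realType} {a : seq nat} {F : param R a -> R} {th0 : param R a} :
  continuous F -> argmin F th0 -> exists th, argmin_star F th.
Proof.
move=> F_cont F_th0.
have [th F_th th_min] : exists2 th, argmin F th & forall t, argmin F t -> norm_inf th <= norm_inf t.
  apply: (EVT_min_closed_bounded (norm_inf th0) (@continuous_norm_inf R a) _ F_th0).
    exact: closed_argmin.
  by move=> t _ t_le i; exact: le_trans (normr_le_norm_inf t i) t_le.
by exists th.
Qed.

Lemma argmin_penalized_le {R : realType} {T : Type} {G H : T -> R} {c : R} {th ths : T} :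
  0 < c ->
  argmin (fun t => G t + c * H t) th -> argmin G ths -> H th <= H ths.
Proof.
move=> c_gt0 th_min ths_min; rewrite -(ler_pM2l c_gt0) -(lerD2l (G th)).
by apply: le_trans (th_min ths) _; rewrite lerD2r.
Qed.

Section empirical_risk.
Context {R : realType} {d : nat} {a : seq nat} {p : R}.
Context {xs : nat -> 'rV[R]_d} {ys : nat -> R} {n : nat}.
Hypothesis p_gt0 : 0 < p.

Let risk (lam : R) : param R a -> R := emp_risk p xs ys n lam.

Lemma emp_riskE lam : risk lam = fun th => risk 0 th + lam / 2 * norm_pp p th.
Proof. by apply/funext => th; rewrite /risk /emp_risk !mul0r addr0. Qed.

Lemma emp_risk0_ge0 th : 0 <= risk 0 th.
Proof.
rewrite /risk /emp_risk !mul0r addr0.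
by apply: mulr_ge0; [rewrite invr_ge0|apply: sumr_ge0 => i _; exact: sqr_ge0].
Qed.

Lemma continuous_emp_risk lam : continuous (risk lam).
Proof.
rewrite /risk /emp_risk; apply: continuousT_add; last first.
  by apply: continuousT_mul; [exact: cst_continuous|exact: continuous_norm_pp].
apply: continuousT_mul; first exact: cst_continuous.
apply: continuous_sumr => i _; rewrite /GRing.exp /=.
have fit_cont : continuous (fun th : param R a => realization th (xs i) - ys i).
  by apply: continuousT_add; [exact: continuous_realization|exact: cst_continuous].
by apply: continuousT_mul => //; apply: continuousT_mul => //; exact: cst_continuous.
Qed.

Lemma argmin_emp_risk_exists lam : 0 < lam -> exists th, argmin (risk lam) th.
Proof.
move=> lam_gt0.
have [th _ th_min] : exists2 th, setT th & forall t, setT t -> risk lam th <= risk lam t.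
  apply: (EVT_min_closed_bounded ((risk lam 0 / (lam / 2)) `^ p^-1)
    (continuous_emp_risk lam) closedT (I : setT 0)) => t _ t_le i.
  apply: normr_le_norm_pp_root => //.
  rewrite ler_pdivlMr ?divr_gt0 // mulrC; apply: le_trans t_le.
  by rewrite emp_riskE lerDr; exact: emp_risk0_ge0.
by exists th => t; exact: th_min.
Qed.

Lemma argmin_emp_risk_norm_inf_le lam th ths : 0 < lam ->
  argmin (risk lam) th -> argmin (risk 0) ths ->
  norm_inf th <= (nparams a)%:R `^ p^-1 * norm_inf ths.
Proof.
move=> lam_gt0; rewrite emp_riskE => th_min ths_min.
have half_lam_gt0 : 0 < lam / 2 by rewrite divr_gt0.
have pp_le := argmin_penalized_le half_lam_gt0 th_min ths_min.
apply: norm_inf_le => [|i]; first by apply: mulr_ge0; [exact: powR_ge0|exact: norm_inf_ge0].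
rewrite -(powRK p_gt0 (norm_inf_ge0 ths)) -powRM ?powR_ge0 //.
apply: normr_le_norm_pp_root => //; apply: le_trans pp_le _.
exact: norm_pp_le_norm_inf (ltW p_gt0).
Qed.

Lemma argmin_star_emp_risk_norm_inf_le {lam : R} {th : param R a} : (0 < nparams a)%N ->
  (exists th0, argmin (risk 0) th0) -> 0 <= lam -> argmin_star (risk lam) th ->
  exists2 ths, argmin_star (risk 0) ths &
    norm_inf th <= (nparams a)%:R `^ p^-1 * norm_inf ths.
Proof.
move=> a_gt0 [th0 th0_min]; rewrite le_eqVlt => /predU1P[<- th_star|lam_gt0 th_star].
  exists th => //; rewrite ler_peMl ?norm_inf_ge0 //.
  rewrite -[leLHS](powRr0 (nparams a)%:R).
  by apply: ler_powR; rewrite ?ler1n ?invr_ge0 ?(ltW p_gt0).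
have [ths ths_star] := argmin_star_exists (continuous_emp_risk 0) th0_min.
by exists ths => //; exact: argmin_emp_risk_norm_inf_le lam_gt0 th_star.1 ths_star.1.
Qed.

End empirical_risk.

Lemma nparams_gt0 {d : nat} {a : seq nat} : arch_ok d a -> (0 < nparams a)%N.
Proof.
move=> /and3P[size_a _ /eqP last_a].
have depth_gt0 : (0 < depth a)%N by rewrite /depth -ltnS prednK // ltnW.
rewrite /nparams -(prednK (ltnW size_a)) -/(depth a).
by rewrite big_nat_recr //= last_a addn1 addnS.
Qed.

Theorem lemma2 (R : realType) (d : nat) (a : seq nat) (p : R)
    (xs : nat -> 'rV[R]_d) (ys : nat -> R) :
  arch_ok d a -> 0 < p ->
  (forall i (j : 'I_d), 0 <= xs i 0 j <= 1) ->
  (forall i, ys i = 1 \/ ys i = -1) ->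
  (* (A4), pathwise: the empirical argmins are nonempty ... *)
  (forall n : nat, (1 <= n)%N ->
     exists th : param R a, argmin (emp_risk p xs ys n 0) th) ->
  (* ... and R^* = sup_n sup { |th|_inf : th in argmin^* R_n } is finite *)
  (exists B : R, forall (n : nat) (th : param R a), (1 <= n)%N ->
     argmin_star (emp_risk p xs ys n 0) th -> norm_inf th <= B) ->
  let Rstar := ereal_sup [set r | exists (n : nat) (th : param R a),
        [/\ (1 <= n)%N, argmin_star (emp_risk p xs ys n 0) th & r = (norm_inf th)%:E]] in
  (forall (n : nat) (lam : R), (1 <= n)%N -> 0 < lam ->
     exists th : param R a, argmin (emp_risk p xs ys n lam) th) /\
  (ereal_sup [set r | exists (n : nat) (lam : R) (th : param R a),
        [/\ (1 <= n)%N, (0 <= lam)%R, argmin_star (emp_risk p xs ys n lam) th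
          & r = (norm_inf th)%:E]]
   <= Rstar * ((nparams a)%:R `^ p^-1)%:E)%E.
Proof.
move=> a_ok p_gt0 _ _ argmin_exists _ Rstar; split => [n lam _|].
  exact: argmin_emp_risk_exists.
apply: ge_ereal_sup => _ [n [lam [th [n_ge1 lam_ge0 th_star ->]]]].
have [ths ths_star th_le] := argmin_star_emp_risk_norm_inf_le p_gt0
  (nparams_gt0 a_ok) (argmin_exists n n_ge1) lam_ge0 th_star.
have ths_le_Rstar : ((norm_inf ths)%:E <= Rstar)%E.
  by apply: ereal_sup_ubound; exists n, ths.
apply: le_trans (lee_wpmul2r _ ths_le_Rstar); last by rewrite lee_fin powR_ge0.
by rewrite -EFinM lee_fin mulrC.
Qed.
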